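(* Let $d\ge1$ and $t\ge1$ be integers, $M\ge1$ a real constant, and $f:[0,1]^d\to\mathbb{R}$ any function. Let $\hat f$ be the neural network produced by the construction described in the context. Then for every $\mathbf{p}\in P=\{(i_1,\dots,i_d)/t: i_r\in\mathbb{Z},\ 0\le i_r\le t\}$, $|f(\mathbf{p})-\hat f(\mathbf{p})|=0$.
   Context: Let $\sigma(z)=\max(z,0)$ and $k=(t+1)^d$. For an integer $0\le i\le k-1$ let $\boldsymbol\pi^i=(\pi^i_1,\dots,\pi^i_d)$ be its base-$(t+1)$ digit vector, i.e. $0\le\pi^i_r\le t$ and $i=\sum_{r=1}^d\pi^i_r(t+1)^{d-r}$; then $\{\boldsymbol\pi^i/t\}_{i=0}^{k-1}=P$. For parameters $a_j,b_{1,j},\dots,b_{d,j}$ define the g-unit $\hat g_j(\mathbf{x})=a_j\,\sigma\big(\sum_{r=1}^d -M\sigma(-x_r+b_{r,j})+\tfrac1t\big)$. Construction: set $b=f(\mathbf{0})$; for $i=1,2,\dots,k-1$ in order: let $\hat y=b+\sum_{j=1}^{i-1}\hat g_j(\boldsymbol\pi^i/t)$ (computed with the already fixed parameters), set $b_{r,i}=\pi^i_r/t$ for $r=1,\dots,d$, and set $a_i=t\big(f(\boldsymbol\pi^i/t)-\hat y\big)$. The output is $\hat f(\mathbf{x})=b+\sum_{i=1}^{k-1}\hat g_i(\mathbf{x})$. *)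

From mathcomp Require Import all_boot all_order all_algebra.
From mathcomp Require Import reals.
Set Implicit Arguments. Unset Strict Implicit. Unset Printing Implicit Defensive.
Import Order.TTheory GRing.Theory Num.Theory.
Local Open Scope ring_scope.

Section Construction.
Variable R : realType.
Variables (d t : nat) (M : R) (f : ('I_d -> R) -> R).

Definition relu (z : R) : R := Num.max z 0.

Definition kpts : nat := (t.+1 ^ d)%N.

(* base-(t+1) digit pi^i_r, with r : 'I_d 0-indexed (paper's r = r0+1),
   so pi^i_{r0+1} = (i / (t+1)^(d-1-r0)) mod (t+1) *)
Definition digit (i : nat) (r : 'I_d) : nat :=
  ((i %/ (t.+1 ^ (d - r.+1))) %% t.+1)%N.

Definition gridpt (i : nat) : 'I_d -> R := fun r => (digit i r)%:R / t%:R.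

Definition gunit (a : R) (b : 'I_d -> R) (x : 'I_d -> R) : R :=
  a * relu (\sum_(r < d) (- M * relu (- x r + b r)) + t%:R^-1).

Definition bias : R := f (fun _ => 0).

(* the j-th unit (j >= 1) given the list as of coefficients a_1, a_2, ...
   (a_j = nth 0 as (j-1)); b_{r,j} = pi^j_r / t *)
Definition unit_j (as_ : seq R) (j : nat) (x : 'I_d -> R) : R :=
  gunit (nth 0 as_ j.-1) (gridpt j) x.

Fixpoint coeffs (n : nat) : seq R :=
  match n with
  | 0 => [::]
  | n'.+1 =>
      let as_ := coeffs n' in
      let i := n'.+1 in
      let yhat := bias + \sum_(1 <= j < i) unit_j as_ j (gridpt i) in
      rcons as_ (t%:R * (f (gridpt i) - yhat))
  end.

Definition fhat (x : 'I_d -> R) : R :=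
  bias + \sum_(1 <= i < kpts) unit_j (coeffs kpts.-1) i x.

End Construction.

Definition in_grid (R : realType) (d t : nat) (p : 'I_d -> R) : Prop :=
  exists idx : 'I_d -> nat,
    (forall r, (idx r <= t)%N) /\ (forall r, p r = (idx r)%:R / t%:R).

(* The network is built so that each new unit fixes the value at one new grid
   point without disturbing the earlier ones.  The unit with breakpoint pi^j/t
   evaluated at the grid point pi^i/t is a_j/t when every digit of j is at most
   the corresponding digit of i, and 0 otherwise: a digit of j exceeding that of
   i makes one ReLU term at least 1/t, and M >= 1 then kills the outer ReLU.
   Digitwise domination forces j <= i, so at pi^i/t the units j > i vanish, the
   units j < i sum to the prediction y_hat used to choose a_i, and unit i adds
   exactly f(pi^i/t) - y_hat. *)

From mathcomp Require Import all_boot all_order all_algebra.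
From mathcomp Require Import reals zify ring lra.
From mathcomp Require Import boolp.
Import Order.TTheory GRing.Theory Num.Theory.

Set Implicit Arguments.
Unset Strict Implicit.
Unset Printing Implicit Defensive.

Lemma modn_mul_split m n d : m %% (n * d) = m %% d + (m %/ d %% n) * d.
Proof.
by rewrite modn_divl {1}(divn_eq (m %% (n * d)) d) modn_dvdm ?dvdn_mull // addnC.
Qed.

Lemma sum_digits_modn b n m : \sum_(s < n) (m %/ b ^ s %% b) * b ^ s = m %% b ^ n.
Proof.
elim: n => [|n IHn]; first by rewrite big_ord0 expn0 modn1.
by rewrite big_ord_recr /= IHn expnS modn_mul_split.
Qed.

Lemma digit_expand d t i : i < t.+1 ^ d ->
  i = \sum_(r < d) digit t i r * t.+1 ^ (d - r.+1).
Proof.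
move=> lt_i; rewrite -{1}(modn_small lt_i) -sum_digits_modn.
by rewrite (reindex_inj rev_ord_inj).
Qed.

Lemma leq_digits d t i j : i < kpts d t -> j < kpts d t ->
  (forall r : 'I_d, digit t j r <= digit t i r) -> j <= i.
Proof.
move=> lt_i lt_j le_ji; rewrite (digit_expand lt_i) (digit_expand lt_j).
by apply: leq_sum => r _; rewrite leq_mul2r le_ji orbT.
Qed.

Lemma digit_ltn d t i (r : 'I_d) : digit t i r < t.+1.
Proof. exact: ltn_pmod. Qed.

Definition digits d t i : {ffun 'I_d -> 'I_t.+1} :=
  [ffun r => Ordinal (digit_ltn t i r)].
Arguments digits {d} t i.

Lemma digits_onto d t (v : {ffun 'I_d -> 'I_t.+1}) :
  exists2 i, i < kpts d t & digits t i = v.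
Proof.
pose D (i : 'I_(kpts d t)) : {ffun 'I_d -> 'I_t.+1} := digits t i.
have D_inj : injective D.
  move=> i j /ffunP eq_ij; apply/val_inj/eqP; rewrite eqn_leq.
  by apply/andP; split; apply: leq_digits (ltn_ord _) (ltn_ord _) _ => r;
    have := congr1 val (eq_ij r); rewrite !ffunE /= => ->.
have : v \in codom D by apply: inj_card_onto; rewrite // card_ffun !card_ord.
by case/codomP => i ->; exists i.
Qed.

Local Open Scope ring_scope.

Lemma relu_ge0 (R : realType) (z : R) : 0 <= relu z.
Proof. by rewrite /relu le_max lexx orbT. Qed.

Lemma relu_ge (R : realType) (z : R) : z <= relu z.
Proof. by rewrite /relu le_max lexx. Qed.

Section Network.
Variables (R : realType) (d t : nat) (M : R) (f : ('I_d -> R) -> R).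
Hypotheses (t_ge1 : (1 <= t)%N) (M_ge1 : 1 <= M).

Local Notation gp i := (gridpt R t i : 'I_d -> R).

Lemma gridpt_sub i j (r : 'I_d) :
  gp j r - gp i r = ((digit t j r)%:R - (digit t i r)%:R) / t%:R.
Proof. by rewrite /gridpt mulrBl. Qed.

Lemma gunit_gridpt_le a i j : (forall r : 'I_d, (digit t j r <= digit t i r)%N) ->
  gunit t M a (gp j) (gp i) = a / t%:R.
Proof.
move=> le_ji; rewrite /gunit big1 ?add0r => [|r _].
  by rewrite /relu max_l // invr_ge0 ler0n.
rewrite /relu max_r ?mulr0 // addrC gridpt_sub.
by rewrite mulr_le0_ge0 ?invr_ge0 ?ler0n // subr_le0 ler_nat.
Qed.

Lemma gunit_gridpt_gt a i j (r0 : 'I_d) : (digit t i r0 < digit t j r0)%N ->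
  gunit t M a (gp j) (gp i) = 0.
Proof.
move=> lt_ij.
have rest_le0 : \sum_(r < d | r != r0) - M * relu (- gp i r + gp j r) <= 0.
  apply: sumr_le0 => r _; rewrite mulNr oppr_le0 mulr_ge0 ?relu_ge0 //.
  exact: le_trans ler01 M_ge1.
have gap : t%:R^-1 <= - gp i r0 + gp j r0.
  rewrite addrC gridpt_sub -[X in X <= _]mul1r ler_wpM2r ?invr_ge0 ?ler0n //.
  by rewrite lerBrDr -(natrD R 1) ler_nat add1n.
have := relu_ge (- gp i r0 + gp j r0).
set x := relu _ => ge_x.
have le_Mx : x <= M * x by rewrite ler_peMl ?relu_ge0.
have arg_le0 : \sum_(r < d) - M * relu (- gp i r + gp j r) + t%:R^-1 <= 0.
  rewrite (bigD1 r0) //= -/x; lra.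
by rewrite /gunit /relu (max_r arg_le0) mulr0.
Qed.

Lemma size_coeffs n : size (coeffs t M f n) = n.
Proof. by elim: n => //= n IHn; rewrite size_rcons IHn. Qed.

Lemma nth_coeffs m n j : (m <= n)%N -> (j < m)%N ->
  nth 0 (coeffs t M f n) j = nth 0 (coeffs t M f m) j.
Proof.
elim: n => [|n IHn] le_mn lt_jm; first by move: le_mn; rewrite leqn0 => /eqP ->.
case: (ltngtP m n.+1) le_mn => // [lt_mn|-> //] _.
by rewrite /= nth_rcons size_coeffs (leq_trans lt_jm lt_mn) IHn.
Qed.

Definition acoef i := nth 0 (coeffs t M f i) i.-1.

(* [partial_net i (gp i)] is the paper's y_hat at step i. *)
Definition partial_net n (x : 'I_d -> R) :=
  bias f + \sum_(1 <= j < n) gunit t M (acoef j) (gp j) x.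

Lemma coeffs_net n m x : (m <= n.+1)%N ->
  bias f + \sum_(1 <= j < m) unit_j t M (coeffs t M f n) j x = partial_net m x.
Proof.
move=> le_mn; congr (_ + _); apply: eq_big_nat => j /andP[ge1_j lt_jm].
by rewrite /unit_j (@nth_coeffs j n) //; lia.
Qed.

Lemma fhat_partial_net : fhat t M f = partial_net (kpts d t).
Proof.
apply: funext => x.
by rewrite /fhat coeffs_net // prednK // expn_gt0.
Qed.

Lemma acoefE i : (1 <= i)%N ->
  acoef i = t%:R * (f (gp i) - partial_net i (gp i)).
Proof.
case: i => // n _.
by rewrite /acoef /= nth_rcons size_coeffs ltnn eqxx coeffs_net.
Qed.

Lemma partial_net_gridpt i : partial_net i.+1 (gp i) = f (gp i).
Proof.
case: i => [|i].
  rewrite /partial_net big_geq // addr0 /bias; congr f.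
  by apply: funext => r; rewrite /gridpt /digit div0n mod0n mul0r.
have tn0 : t%:R != 0 :> R by rewrite pnatr_eq0 -lt0n.
rewrite /partial_net big_nat_recr //= addrA -/(partial_net _ _).
by rewrite gunit_gridpt_le // acoefE //; field.
Qed.

Lemma partial_net_stable i n : (i < n)%N -> (n <= kpts d t)%N ->
  partial_net n (gp i) = partial_net i.+1 (gp i).
Proof.
move=> lt_in le_nk; rewrite /partial_net (@big_cat_nat _ _ _ i.+1) //=.
rewrite [X in _ + (_ + X)]big_nat_cond [X in _ + (_ + X)]big1 ?addr0 //.
move=> j /andP[/andP[lt_ij lt_jn] _].
have : ~~ [forall r : 'I_d, digit t j r <= digit t i r]%N.
  apply: contraTN lt_ij => /forallP le_ji; rewrite -leqNgt.
  by apply: leq_digits => //; apply: leq_trans le_nk.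
by rewrite negb_forall => /existsP[r0]; rewrite -ltnNge; apply: gunit_gridpt_gt.
Qed.

Lemma fhat_gridpt i : (i < kpts d t)%N -> fhat t M f (gp i) = f (gp i).
Proof.
by move=> lt_i; rewrite fhat_partial_net partial_net_stable ?partial_net_gridpt.
Qed.

Lemma gridpt_onto p : in_grid t p -> exists2 i, (i < kpts d t)%N & p = gp i.
Proof.
case=> idx [le_idx p_idx].
have [i lt_i digits_i] := digits_onto [ffun r => inord (idx r) : 'I_t.+1].
exists i => //; apply: funext => r; rewrite p_idx.
have := congr1 val (congr1 (fun v : {ffun 'I_d -> 'I_t.+1} => v r) digits_i).
by rewrite /gridpt !ffunE /= inordK ?ltnS // => ->.
Qed.

End Network.

Theorem lemmaA1 (R : realType) (d t : nat) (M : R) (f : ('I_d -> R) -> R) :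
  (1 <= d)%N -> (1 <= t)%N -> 1 <= M ->
  forall p : 'I_d -> R, in_grid t p ->
    `| f p - fhat t M f p | = 0.
Proof.
move=> _ t_ge1 M_ge1 p /gridpt_onto[i lt_i ->].
by rewrite fhat_gridpt // subrr normr0.
Qed.
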